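(* Let $\mathcal{G}$ be an additive arithmetical semigroup (with the setup below), $S\subseteq\mathcal{P}$, and let $f\colon\mathbb{Z}_{\ge0}\to\mathbb{C}$ satisfy $f(0)=0$. Then for every $g\in\mathcal{G}$, $$\sum_{h\mid g}\mu(h)\,1_{\mathfrak{D}(\mathcal{G},S)}(h)\,f(d_-(h))=-Q_S(g)\,f(d^+(g)).$$
   Context: $\mathcal{G}$ is a commutative monoid (written additively, identity $e_{\mathcal{G}}$) freely generated by a countable set $\mathcal{P}$ of primes, with an additive degree map $\partial\colon\mathcal{G}\to\mathbb{Z}_{\ge0}$, $\partial(e_{\mathcal{G}})=0$, $\partial(P)>0$ for primes. $h\mid g$ means $g=h+r$ for some $r\in\mathcal{G}$. For $g\ne e_{\mathcal{G}}$: $d_-(g)=\min\{\partial(P):P\in\mathcal{P},P\mid g\}$, $d^+(g)=\max\{\partial(P):P\mid g\}$; conventions $d_-(e_{\mathcal{G}})=0$ and $d^+(e_{\mathcal{G}})=0$. $g$ is distinguishable if $g\ne e_{\mathcal{G}}$ and exactly one prime $P_{\min}(g)\mid g$ has degree $d_-(g)$; $\mathfrak{D}(\mathcal{G},S)=\{g\text{ distinguishable}:P_{\min}(g)\in S\}\cup\{e_{\mathcal{G}}\}$, with indicator function $1_{\mathfrak{D}(\mathcal{G},S)}$. $Q_S(g)=\#\{P\in S:P\mid g,\ \partial(P)=d^+(g)\}$. $\mu$ is the Möbius function ($\mu(e_{\mathcal{G}})=1$, $(-1)^k$ on sums of $k$ distinct primes, $0$ if $2P\mid g$ for some prime $P$).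 *)

From HB Require Import structures.
From mathcomp Require Import all_boot all_order all_algebra.
From mathcomp Require Import finmap multiset.
From mathcomp Require Import reals.
From mathcomp Require Import complex.

Set Implicit Arguments.
Unset Strict Implicit.
Unset Printing Implicit Defensive.

Import GRing.Theory.
Local Open Scope fset_scope.
Local Open Scope mset_scope.

(* The additive arithmetical semigroup G freely generated by the primes P
   (a countable type) is {mset P}: g = sum_P (g P) * P, addition is `+`,
   the identity e_G is mset0. *)
Section Semigroup.
Variable P : countType.
Variable deg : P -> nat.

Definition gdeg (g : {mset P}) : nat := \sum_(p <- g) deg p.

Definition gdvd (h g : {mset P}) : Prop := exists r : {mset P}, g = h `+` r.

Fixpoint divs_seq (s : seq P) : seq {mset P} :=
  if s is x :: s' then divs_seq s' ++ [seq x +` h | h <- divs_seq s'] else [:: mset0].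

Definition gdivisors (g : {mset P}) : seq {mset P} := undup (divs_seq g).

Lemma mem_divs_seq (s : seq P) h : (h \in divs_seq s) = (h `<=` seq_mset s).
Proof.
elim: s h => [|x s IH] h /=.
  rewrite inE; apply/eqP/msubsetP => [-> y|H]; first by rewrite mset0E.
  apply/msetP => y; rewrite mset0E; apply/eqP; rewrite -leqn0; move: (H y); by rewrite mset_seqE.
rewrite mem_cat IH mset_cons; apply/orP/idP => [[H|/mapP[h' Hh' ->]]|H].
- apply: (msubset_trans H); apply/msubsetP => y; rewrite mset1DE; exact: leq_addl.
- by apply: msetDS; rewrite -IH.
case: (posnP (h x)) => xh; last first.
  right; apply/mapP; exists (h `\ x); last by rewrite msetB1K // in_mset.
  rewrite IH; apply/msubsetP => y; move/msubsetP: H => /(_ y).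
  by rewrite msetB1E mset1DE leq_subLR.
left; apply/msubsetP => y; move/msubsetP: H => /(_ y); rewrite mset1DE.
by case: (eqVneq y x) => [->|//]; rewrite xh.
Qed.

Lemma gdvdP (h g : {mset P}) : gdvd h g <-> (h `<=` g).
Proof.
split=> [[r ->]|H]; last by exists (g `\` h); rewrite msetBDKC.
by rewrite -{1}(msetD0 h); apply: msetDS; apply: msub0set.
Qed.

Lemma mem_gdivisors (g h : {mset P}) : h \in gdivisors g <-> gdvd h g.
Proof. by rewrite mem_undup mem_divs_seq seq_mset_id gdvdP. Qed.

Lemma uniq_gdivisors (g : {mset P}) : uniq (gdivisors g).
Proof. exact: undup_uniq. Qed.

(* d_-(g): least degree of a prime dividing g; 0 for e_G *)
Definition dminus (g : {mset P}) : nat :=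
  if enum_mset g is p :: s then foldr (fun q m => minn (deg q) m) (deg p) s else 0.

(* d^+(g): largest degree of a prime dividing g; 0 for e_G *)
Definition dplus (g : {mset P}) : nat := \max_(p <- g) deg p.

Definition nb_min (g : {mset P}) : nat :=
  count (fun p => deg p == dminus g) (finsupp g).

Definition distinguishable (g : {mset P}) : bool := (g != mset0) && (nb_min g == 1%N).

(* membership in D(G,S): e_G, or g distinguishable with P_min(g) in S
   (P_min(g) is the unique prime p | g with deg p = d_-(g)) *)
Definition inD (S : pred P) (g : {mset P}) : bool :=
  (g == mset0) ||
  (distinguishable g && has (fun p => (deg p == dminus g) && (p \in S)) (finsupp g)).

Definition QS (S : pred P) (g : {mset P}) : nat :=
  count (fun p => (p \in S) && (deg p == dplus g)) (finsupp g).

Definition gmu {R : pzRingType} (g : {mset P}) : R :=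
  if all (fun p => g p <= 1)%N (finsupp g) then ((-1) ^+ size (finsupp g))%R else 0%R.

Definition indD {R : pzRingType} (S : pred P) (g : {mset P}) : R := ((inD S g)%:R)%R.

End Semigroup.

From HB Require Import structures.
From mathcomp Require Import all_boot all_order all_algebra.
From mathcomp Require Import finmap multiset.
From mathcomp Require Import reals.
From mathcomp Require Import complex.

(* Only squarefree divisors contribute (mu vanishes elsewhere), so the sum
   runs over the subsets h of the support of g, enumerated by [divs_seq].
   Choose a prime x of g of maximal degree and let t be the other primes.
   The subsets of x :: t are the subsets h of t and the sets x + h.  For
   h <> e, adjoining x flips the Moebius sign and keeps P_min(h) when
   d_-(h) < deg x, so the two terms cancel; when d_-(h) = deg x the set x + h
   has two primes of minimal degree and its term vanishes.  What survives is
   the term of {x} and the terms of those h with d_-(h) >= deg x; since all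
   primes of h then have the common degree deg x, such an h is
   distinguishable only if it is a single prime z with deg z = deg x.  Each
   such prime contributes -[z in S] f(deg x), which gives -Q_S(g) f(d^+(g))
   (the case g = e uses f(0) = 0). *)

Set Implicit Arguments.
Unset Strict Implicit.
Unset Printing Implicit Defensive.
Import GRing.Theory.
Local Open Scope mset_scope.
Local Open Scope ring_scope.

Lemma big_uniq_support (T : eqType) (V : nmodType) (s1 s2 : seq T) (F : T -> V) :
  uniq s1 -> uniq s2 -> {subset s2 <= s1} ->
  (forall x, x \in s1 -> x \notin s2 -> F x = 0) ->
  \sum_(x <- s1) F x = \sum_(x <- s2) F x.
Proof.
move=> u1 u2 s21 F0.
rewrite (bigID (mem s2)) /= [X in _ + X]big1_seq ?addr0; last first.
  by move=> x /andP[xn2 x1]; apply: F0.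
rewrite -big_filter; apply/perm_big/uniq_perm; rewrite ?filter_uniq //.
by move=> x; rewrite mem_filter andb_idr //; apply: s21.
Qed.

Lemma sum_neg_indicator (T : Type) (V : pzRingType) (s : seq T) (a b : pred T) (c : V) :
  \sum_(z <- s | a z) - (b z)%:R * c = - (count (predI b a) s)%:R * c.
Proof.
elim: s => [|z s IH]; first by rewrite big_nil oppr0 mul0r.
rewrite big_cons IH /=; case: (a z); rewrite ?andbF ?andbT //=.
by rewrite natrD opprD mulrDl.
Qed.

Section SquarefreeElements.
Variable P : countType.
Variable deg : P -> nat.

Definition squarefree (g : {mset P}) : bool := all (fun p => (g p <= 1)%N) (finsupp g).

Lemma finsupp_seq_mset (w : seq P) : uniq w -> perm_eq (finsupp (seq_mset w)) w.
Proof.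
move=> uw; apply: uniq_perm => // a.
by rewrite msuppE in_mset mset_seqE -has_pred1 has_count.
Qed.

Lemma seq_mset_eq0 (w : seq P) : (seq_mset w == mset0) = (w == [::]).
Proof.
case: w => [|y w]; first by apply/eqP/msetP => a; rewrite mset_seqE mset0E.
by apply/negbTE/eqP => /msetP /(_ y); rewrite mset_seqE mset0E /= eqxx.
Qed.

Lemma gmu_seq_mset (R : pzRingType) (w : seq P) :
  uniq w -> gmu (seq_mset w) = (-1) ^+ size w :> R.
Proof.
move=> uw; rewrite /gmu (perm_all _ (finsupp_seq_mset uw)).
rewrite (perm_size (finsupp_seq_mset uw)).
suff -> : all (fun p => (seq_mset w p <= 1)%N) w by [].
by apply/allP => p _; rewrite mset_seqE count_uniq_mem // leq_b1.
Qed.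

Lemma foldr_minn_deg (p : P) (s : seq P) :
  let m := foldr (fun q m => minn (deg q) m) (deg p) s in
  m \in map deg (p :: s) /\ {in p :: s, forall q, (m <= deg q)%N}.
Proof.
elim: s => [|q s [/= m_in m_le]]; first by split=> [|q]; rewrite ?mem_head // inE => /eqP->.
set m := foldr _ _ s in m_in m_le *; split.
  rewrite /minn; case: ifP => _; first by rewrite !inE eqxx orbT.
  by move: m_in; rewrite !inE => /orP[->|->]; rewrite ?orbT.
move=> r; rewrite !inE => /or3P[/eqP r_p|/eqP->|r_s]; first 2 [exact: geq_minl].
- by rewrite r_p (leq_trans (geq_minr _ _)) // m_le // mem_head.
- by rewrite (leq_trans (geq_minr _ _)) // m_le // inE r_s orbT.
Qed.

Lemma dminus_seq_mset (w : seq P) : w != [::] ->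
  dminus deg (seq_mset w) \in map deg w /\
  {in w, forall q, (dminus deg (seq_mset w) <= deg q)%N}.
Proof.
move=> wn; have pe := perm_eq_seq_mset w; rewrite /dminus.
case E: (enum_mset (seq_mset w)) pe => [|p s] pe.
  by move: (perm_size pe) wn; case: (w).
have [m_in m_le] := foldr_minn_deg p s.
split; first by move/mapP: m_in => [r r_in ->]; rewrite map_f // -(perm_mem pe).
by move=> q q_in; apply: m_le; rewrite (perm_mem pe).
Qed.

Lemma dminus_seq_mset_eq (w : seq P) (m : nat) :
  m \in map deg w -> {in w, forall q, (m <= deg q)%N} -> dminus deg (seq_mset w) = m.
Proof.
move=> m_in m_le; have wn : w != [::] by move: m_in; case: (w).
have [/mapP[q q_in dm_q] dm_le] := dminus_seq_mset wn.
move/mapP: m_in => [r r_in m_r].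
by apply/eqP; rewrite eqn_leq {2}dm_q m_le // andbT m_r dm_le.
Qed.

Lemma dminus_single (y : P) : dminus deg (seq_mset [:: y]) = deg y.
Proof. by apply: dminus_seq_mset_eq; [rewrite mem_head | move=> q; rewrite inE => /eqP->]. Qed.

Lemma inD_seq_mset (S : pred P) (w : seq P) : uniq w -> w != [::] ->
  inD deg S (seq_mset w) =
  (count (fun p => deg p == dminus deg (seq_mset w)) w == 1)%N &&
  has (fun p => (deg p == dminus deg (seq_mset w)) && (p \in S)) w.
Proof.
move=> uw wn; rewrite /inD /distinguishable /nb_min seq_mset_eq0 (negbTE wn) /=.
by rewrite (permP (finsupp_seq_mset uw)) (perm_has _ (finsupp_seq_mset uw)).
Qed.

Lemma uniq_divs_seq (s : seq P) : uniq s -> uniq (divs_seq s).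
Proof.
elim: s => [//|x s IH] /= /andP[x_notin us].
rewrite cat_uniq IH //=; apply/andP; split.
  apply/hasPn => _ /mapP[h _ ->]; rewrite mem_divs_seq; apply/negP => /msubsetP /(_ x).
  by rewrite mset1DE eqxx mset_seqE (count_memPn x_notin).
have addx_inj : injective (fun h => x +` h).
  by move=> a b /(congr1 (fun h => h `\ x)); rewrite !msetD1K.
by rewrite (map_inj_uniq addx_inj) IH.
Qed.

Lemma divs_seq_sublist (s : seq P) (h : {mset P}) : uniq s -> h \in divs_seq s ->
  exists w, [/\ uniq w, {subset w <= s} & h = seq_mset w].
Proof.
move=> us; rewrite mem_divs_seq => /msubsetP h_le.
have in_enum a : (a \in enum_mset h) = (0 < h a)%N by rewrite -in_mset.
exists (enum_mset h); split; last by rewrite seq_mset_id.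
- apply: count_mem_uniq => a; rewrite count_mem_mset.
  move: (h_le a); rewrite mset_seqE count_uniq_mem // in_enum.
  by case: (h a) => [|[|]] //; case: (a \in s).
- move=> a; rewrite in_enum => /leq_trans /(_ (h_le a)).
  by rewrite mset_seqE -has_pred1 -has_count.
Qed.

Lemma single_divs_seq (s : seq P) (z : P) : uniq s -> z \in s ->
  seq_mset [:: z] \in divs_seq s.
Proof.
move=> us zs; rewrite mem_divs_seq; apply/msubsetP => a.
rewrite !mset_seqE /= addn0; case: eqP => //= <-.
by rewrite count_uniq_mem // zs.
Qed.

Lemma sum_divisors_squarefree (V : nmodType) (F : {mset P} -> V) (g : {mset P}) (u : seq P) :
  (forall h, ~~ squarefree h -> F h = 0) -> uniq u -> perm_eq u (finsupp g) ->
  \sum_(h <- gdivisors g) F h = \sum_(h <- divs_seq u) F h.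
Proof.
move=> F_sqf uu pu.
have u_le_g : seq_mset u `<=` g.
  apply/msubsetP => a; rewrite mset_seqE count_uniq_mem //.
  by case Ha: (a \in u) => //=; move: Ha; rewrite (perm_mem pu) msuppE in_mset.
apply: big_uniq_support; rewrite ?uniq_gdivisors ?uniq_divs_seq //.
  move=> h; rewrite mem_divs_seq => h_le; apply/mem_gdivisors/gdvdP.
  exact: msubset_trans u_le_g.
move=> h /mem_gdivisors /gdvdP /msubsetP h_le h_notin; apply: F_sqf.
apply: contra h_notin => /allP h_sqf; rewrite mem_divs_seq; apply/msubsetP => a.
rewrite mset_seqE count_uniq_mem //; case: (posnP (h a)) => [->//|h_pos].
have a_supp : a \in finsupp h by rewrite msuppE in_mset.
have -> : a \in u by rewrite (perm_mem pu) msuppE in_mset (leq_trans h_pos (h_le a)).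
exact: h_sqf a_supp.
Qed.

Lemma exists_max_deg (s : seq P) : s != [::] ->
  exists2 x, x \in s & {in s, forall q, (deg q <= deg x)%N}.
Proof.
elim: s => [//|y [|z s] IH] _.
  by exists y; rewrite ?mem_head // => q; rewrite inE => /eqP->.
have [x xs x_max] := IH isT.
have [y_le | x_lt] := leqP (deg y) (deg x).
  exists x; first by rewrite inE xs orbT.
  by move=> q; rewrite inE => /orP[/eqP->|/x_max].
exists y; rewrite ?mem_head // => q; rewrite inE => /orP[/eqP->//|/x_max q_le].
exact: leq_trans q_le (ltnW x_lt).
Qed.

Lemma dplus_eq (g : {mset P}) (x : P) : x \in finsupp g ->
  {in finsupp g, forall q, (deg q <= deg x)%N} -> dplus deg g = deg x.
Proof.
move=> x_in x_max; apply/eqP; rewrite eqn_leq; apply/andP; split.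
  by apply/bigmax_leqP_seq => q q_in _; apply: x_max; rewrite msuppE.
by apply: (leq_bigmax_seq x) => //; rewrite -msuppE.
Qed.

End SquarefreeElements.

Section MoebiusSum.
Variable P : countType.
Variable deg : P -> nat.
Variable R : pzRingType.
Variable S : pred P.
Variable f : nat -> R.

Definition term (h : {mset P}) : R := gmu h * indD deg S h * f (dminus deg h).

Lemma term_non_squarefree (h : {mset P}) : ~~ squarefree h -> term h = 0.
Proof. by move=> h_sqf; rewrite /term /gmu -/(squarefree h) (negbTE h_sqf) !mul0r. Qed.

Lemma term0 : f 0%N = 0 -> term mset0 = 0.
Proof. by move=> f0; rewrite /term /dminus enum_mset0 f0 mulr0. Qed.

Lemma term_single (y : P) : term (seq_mset [:: y]) = - (y \in S)%:R * f (deg y).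
Proof.
rewrite /term gmu_seq_mset // /indD inD_seq_mset // dminus_single /=.
by rewrite eqxx /= expr1 mulN1r orbF.
Qed.

(* Adjoining to a squarefree e <> 0 a new prime x of degree at least those of
   e: the term changes sign if deg x > d_-(e), and vanishes otherwise since
   then two primes have minimal degree. *)
Lemma term_adjoin_max (x : P) (w : seq P) : uniq (x :: w) -> w != [::] ->
  {in w, forall q, (deg q <= deg x)%N} ->
  term (seq_mset (x :: w)) =
  if (dminus deg (seq_mset w) < deg x)%N then - term (seq_mset w) else 0.
Proof.
move=> uxw wn x_max; have uw : uniq w by case/andP: uxw.
have [m_in m_le] := dminus_seq_mset deg wn.
set m := dminus deg (seq_mset w) in m_in m_le *.
have m_le_x : (m <= deg x)%N by move/mapP: m_in => [q q_in ->]; apply: x_max.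
have dm_xw : dminus deg (seq_mset (x :: w)) = m.
  apply: dminus_seq_mset_eq; first by rewrite inE m_in orbT.
  by move=> q; rewrite inE => /orP[/eqP->|/m_le].
rewrite /term dm_xw !gmu_seq_mset // /indD !inD_seq_mset // dm_xw -/m /=.
have [m_lt | x_le_m] := ltnP m (deg x).
  have -> : (deg x == m) = false by rewrite eq_sym ltn_eqF.
  by rewrite add0n exprS mulN1r !mulNr.
have -> : deg x == m by rewrite eqn_leq x_le_m m_le_x.
have : (0 < count (fun p => deg p == m) w)%N.
  by rewrite -has_count; move/mapP: m_in => [q q_in ->]; apply/hasP; exists q.
by case: (count _ w) => [//|c] _ /=; rewrite mulr0 mul0r.
Qed.

Lemma term_equal_degrees (w : seq P) : uniq w -> w != [::] ->
  {in w, forall q, (deg q <= dminus deg (seq_mset w))%N} ->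
  term (seq_mset w) != 0 -> size w = 1%N.
Proof.
move=> uw wn w_min; have [_ m_le] := dminus_seq_mset deg wn.
have all_min : count (fun p => deg p == dminus deg (seq_mset w)) w = size w.
  rewrite -count_predT; apply: eq_in_count => q q_in.
  by rewrite /= eqn_leq w_min // m_le.
rewrite /term /indD inD_seq_mset // all_min => t_neq0.
by apply/eqP; apply: contraNT t_neq0 => /negbTE->; rewrite mulr0 mul0r.
Qed.

Section TopPrime.
(* x is a prime of maximal degree and t lists the other primes of g. *)
Variables (x : P) (t : seq P).
Hypothesis uxt : uniq (x :: t).
Hypothesis x_max : {in t, forall q, (deg q <= deg x)%N}.

Let ut : uniq t. Proof. by case/andP: uxt. Qed.
Let x_notin_t : x \notin t. Proof. by case/andP: uxt. Qed.

Lemma sum_divs_adjoin_max : f 0%N = 0 ->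
  \sum_(h <- divs_seq (x :: t)) term h =
  term (seq_mset [:: x]) +
  \sum_(h <- divs_seq t | (h != mset0) && (deg x <= dminus deg h)%N) term h.
Proof.
move=> f0; have t0 : mset0 \in divs_seq t by rewrite mem_divs_seq msub0set.
have udt := uniq_divs_seq ut.
rewrite /= big_cat big_map (bigD1_seq mset0 t0 udt) (bigD1_seq mset0 t0 udt) /=.
have -> : x +` mset0 = seq_mset [:: x].
  by apply/msetP => a; rewrite mset1DE mset0E mset_seqE /= eq_sym.
rewrite term0 // add0r addrCA -big_split big_mkcondr /=; congr (_ + _).
rewrite big_seq_cond [RHS]big_seq_cond; apply: eq_bigr => h /andP[h_in h_neq0].
have [w [uw wt h_eq]] := divs_seq_sublist ut h_in.
have wn : w != [::] by rewrite -seq_mset_eq0 -h_eq.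
have uxw : uniq (x :: w) by rewrite /= uw andbT; exact: contra (wt x) x_notin_t.
have -> : x +` h = seq_mset (x :: w).
  by apply/msetP => a; rewrite h_eq mset1DE !mset_seqE /= eq_sym.
rewrite term_adjoin_max //; last by move=> q /wt /x_max.
by rewrite -h_eq; case: ltnP; rewrite ?addrN ?addr0.
Qed.

Lemma sum_top_subsets :
  \sum_(h <- divs_seq t | (h != mset0) && (deg x <= dminus deg h)%N) term h =
  \sum_(z <- t | deg z == deg x) term (seq_mset [:: z]).
Proof.
rewrite -[LHS]big_filter.
have -> : \sum_(z <- t | deg z == deg x) term (seq_mset [:: z]) =
          \sum_(h <- [seq seq_mset [:: z] | z <- t & deg z == deg x]) term h.
  by rewrite big_map big_filter.
have single_inj : injective (fun z : P => seq_mset [:: z]).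
  by move=> a b /eq_seq_msetP /perm_mem /(_ a); rewrite !inE eqxx => /esym/eqP.
apply: big_uniq_support.
- by rewrite filter_uniq // uniq_divs_seq.
- by rewrite (map_inj_uniq single_inj) filter_uniq.
- move=> h /mapP[z]; rewrite mem_filter => /andP[/eqP z_deg zt] ->.
  by rewrite mem_filter seq_mset_eq0 dminus_single z_deg leqnn single_divs_seq.
move=> h; rewrite mem_filter => /andP[/andP[h_neq0 x_le] h_in] h_notin.
have [w [uw wt h_eq]] := divs_seq_sublist ut h_in.
apply/eqP; apply: contraNT h_notin; rewrite h_eq => t_neq0.
have wn : w != [::] by rewrite -seq_mset_eq0 -h_eq.
have w_min : {in w, forall q, (deg q <= dminus deg (seq_mset w))%N}.
  by move=> q /wt /x_max q_le; rewrite -h_eq (leq_trans q_le).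
have := term_equal_degrees uw wn w_min t_neq0; rewrite h_eq in x_le.
case: w {uw wn t_neq0 h_eq w_min} x_le wt => [|z [|]] //= x_le wt _.
apply/mapP; exists z => //; rewrite mem_filter wt ?mem_head // andbT.
by rewrite dminus_single in x_le; rewrite eqn_leq x_le x_max // wt ?mem_head.
Qed.

Lemma sum_divs_top_prime : f 0%N = 0 ->
  \sum_(h <- divs_seq (x :: t)) term h =
  - (count (fun p => (p \in S) && (deg p == deg x)) (x :: t))%:R * f (deg x).
Proof.
move=> f0; rewrite sum_divs_adjoin_max // sum_top_subsets.
have -> : term (seq_mset [:: x]) + \sum_(z <- t | deg z == deg x) term (seq_mset [:: z]) =
          \sum_(z <- x :: t | deg z == deg x) term (seq_mset [:: z]).
  by rewrite big_cons eqxx.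
rewrite (eq_bigr (fun z => - (z \in S)%:R * f (deg x))); last first.
  by move=> z /eqP z_deg; rewrite term_single z_deg.
by rewrite sum_neg_indicator.
Qed.

End TopPrime.

End MoebiusSum.

Theorem lemma2p2 (R : realType) (P : countType) (deg : P -> nat)
  (deg_pos : forall p : P, (0 < deg p)%N)
  (S : pred P) (f : nat -> R[i]) (f0 : f 0%N = 0) (g : {mset P}) :
  \sum_(h <- gdivisors g) gmu h * indD deg S h * f (dminus deg h)
  = - (QS deg S g)%:R * f (dplus deg g).
Proof.
have reduce := sum_divisors_squarefree (term_non_squarefree deg S f) (g := g).
have [g0 | supp_neq0] := eqVneq (finsupp g : seq P) [::].
  rewrite -/(term deg S f _) (reduce [::]) ?g0 // big_seq1 term0 //.
  by rewrite /QS g0 oppr0 mul0r.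
have [x x_in x_max] := exists_max_deg deg supp_neq0.
have pe : perm_eq (finsupp g) (x :: rem x (finsupp g)) := perm_to_rem x_in.
have uxt : uniq (x :: rem x (finsupp g)) by rewrite -(perm_uniq pe).
have t_max : {in rem x (finsupp g), forall q, (deg q <= deg x)%N}.
  by move=> q q_in; apply: x_max; rewrite (perm_mem pe) inE q_in orbT.
rewrite -/(term deg S f _) (reduce _ uxt) 1?perm_sym //.
by rewrite sum_divs_top_prime // /QS (dplus_eq x_in x_max) (permP pe).
Qed.
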